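(* Let $n,d\in\mathbb{N}$ with $d\ge 1$, and let $\mathbf{X}=\{\mathbf{x}_1,\dots,\mathbf{x}_m\}\subseteq\mathbb{B}^n$ be any dataset in which every example has at least $d+1$ nonzero entries, i.e. $\langle\mathbf{x}_i,\mathbf{x}_i\rangle\ge d+1$ for all $i$. Let $\tilde{\mathbf{K}}^{(d)}$ and $\tilde{\mathbf{K}}^{(d+1)}$ be the $m\times m$ matrices with entries $\tilde\kappa_\wedge^d(\mathbf{x}_i,\mathbf{x}_j)$ and $\tilde\kappa_\wedge^{d+1}(\mathbf{x}_i,\mathbf{x}_j)$. Then $\tilde\kappa_\wedge^d(\mathbf{x}_i,\mathbf{x}_j)^2\ge\tilde\kappa_\wedge^{d+1}(\mathbf{x}_i,\mathbf{x}_j)^2$ for all $i,j$, and consequently $\mathcal{C}(\tilde{\mathbf{K}}^{(d)})\le\mathcal{C}(\tilde{\mathbf{K}}^{(d+1)})$. In other words, $\tilde\kappa_\wedge^d$ is more general than $\tilde\kappa_\wedge^{d+1}$.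
   Context: $\mathbb{B}=\{0,1\}$. For $\mathbf{x},\mathbf{z}\in\mathbb{B}^n$, $\langle\mathbf{x},\mathbf{z}\rangle=\sum_i x_iz_i$. The Conjunctive kernel (C-Kernel) of arity $d$ is $\kappa_\wedge^d(\mathbf{x},\mathbf{z})=\binom{\langle\mathbf{x},\mathbf{z}\rangle}{d}$; equivalently it is the inner product of the feature maps $\phi_\wedge^d(\mathbf{x})=(\prod_{i=1}^n x_i^{b_i})_{\mathbf{b}\in\mathbb{B}_d}$, where $\mathbb{B}_d=\{\mathbf{b}\in\mathbb{B}^n:\|\mathbf{b}\|_1=d\}$ (each feature is the conjunction of the $d$ variables selected by $\mathbf{b}$). For a kernel $\kappa$, its normalized version is $\tilde\kappa(\mathbf{x},\mathbf{z})=\kappa(\mathbf{x},\mathbf{z})/\sqrt{\kappa(\mathbf{x},\mathbf{x})\kappa(\mathbf{z},\mathbf{z})}$ (defined when $\kappa(\mathbf{x},\mathbf{x}),\kappa(\mathbf{z},\mathbf{z})>0$). The spectral ratio of a positive semidefinite matrix $\mathbf{K}\in\mathbb{R}^{m\times m}$ is $\mathcal{C}(\mathbf{K})=\|\mathbf{K}\|_T/\|\mathbf{K}\|_F=\sum_i\mathbf{K}_{ii}/\sqrt{\sum_{i,j}\mathbf{K}_{ij}^2}$. A kernel $\kappa_1$ is said to be more general than $\kappa_2$ if $\mathcal{C}(\mathbf{K}^{(1)}_{\mathbf{X}})\le\mathcal{C}(\mathbf{K}^{(2)}_{\mathbf{X}})$ for the kernel matrices on the datasets under consideration. *)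

From HB Require Import structures.
From mathcomp Require Import all_boot all_order all_algebra.
Set Implicit Arguments. Unset Strict Implicit. Unset Printing Implicit Defensive.
Import Order.TTheory GRing.Theory Num.Theory.

Definition bvec (n : nat) := 'I_n -> bool.

Definition binner (n : nat) (x z : bvec n) : nat :=
  (\sum_(i < n) (x i && z i))%N.

Definition ckernel (d n : nat) (x z : bvec n) : nat := 'C(binner x z, d).

Local Open Scope ring_scope.

Definition nckernel (R : rcfType) (d n : nat) (x z : bvec n) : R :=
  (ckernel d x z)%:R / Num.sqrt ((ckernel d x x)%:R * (ckernel d z z)%:R).

Definition nkmatrix (R : rcfType) (d n m : nat) (X : 'I_m -> bvec n) : 'M[R]_m :=
  \matrix_(i < m, j < m) nckernel R d (X i) (X j).

(* Spectral ratio C(K) = ||K||_T / ||K||_F = trace K / sqrt(sum_{i,j} K_ij^2). *)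
Definition spectral_ratio (R : rcfType) (m : nat) (K : 'M[R]_m) : R :=
  \tr K / Num.sqrt (\sum_(i < m) \sum_(j < m) K i j ^+ 2).

(* Multiplying by (d+1)^2 and using (d+1) C(k, d+1) = (k - d) C(k, d), the
   pointwise inequality between the squared normalized kernels of arity d+1
   and d reduces to (a - d)^2 <= (p - d)(q - d) for a = <x,z> <= p = <x,x>
   and a <= q = <z,z>.  Both normalized kernel matrices have unit diagonal,
   hence the same trace, so the entrywise inequality between squares compares
   Frobenius norms the right way for the spectral ratios. *)

From HB Require Import structures.
From mathcomp Require Import all_boot all_order all_algebra.
Import Order.TTheory GRing.Theory Num.Theory.

Lemma binnerC n (x z : bvec n) : binner x z = binner z x.
Proof. by apply: eq_bigr => i _; rewrite andbC. Qed.

Lemma binner_le_diagl n (x z : bvec n) : (binner x z <= binner x x)%N.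
Proof. by apply: leq_sum => i _; case: (x i); case: (z i). Qed.

Lemma binner_le_diagr n (x z : bvec n) : (binner x z <= binner z z)%N.
Proof. by rewrite binnerC binner_le_diagl. Qed.

Lemma bin_sqr_succ_ratio_le (a p q d : nat) : (a <= p)%N -> (a <= q)%N ->
  ('C(a, d.+1) ^ 2 * ('C(p, d) * 'C(q, d))
     <= 'C(a, d) ^ 2 * ('C(p, d.+1) * 'C(q, d.+1)))%N.
Proof.
move=> ap aq; rewrite -(@leq_pmul2l (d.+1 ^ 2)) ?expn_gt0 //.
have mul_bin k : (d.+1 * 'C(k, d.+1) = (k - d) * 'C(k, d))%N := mul_bin_left k d.
have sub_sqr_le : ((a - d) ^ 2 <= (p - d) * (q - d))%N.
  by rewrite expnS expn1 leq_mul // leq_sub2r.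
have -> : (d.+1 ^ 2 * ('C(a, d.+1) ^ 2 * ('C(p, d) * 'C(q, d)))
          = (a - d) ^ 2 * ('C(a, d) ^ 2 * ('C(p, d) * 'C(q, d))))%N.
  by rewrite mulnA -expnMn mul_bin expnMn !mulnA.
have -> : (d.+1 ^ 2 * ('C(a, d) ^ 2 * ('C(p, d.+1) * 'C(q, d.+1)))
          = (p - d) * (q - d) * ('C(a, d) ^ 2 * ('C(p, d) * 'C(q, d))))%N.
  by rewrite mulnCA (expnS d.+1) expn1 mulnACA !mul_bin mulnACA mulnCA.
exact: leq_mul.
Qed.

Local Open Scope ring_scope.

Section SpectralRatio.

Variables (R : rcfType) (m : nat).

Definition mxsqnorm (K : 'M[R]_m) : R := \sum_(i < m) \sum_(j < m) K i j ^+ 2.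

Lemma mxsqnorm_ge0 (K : 'M[R]_m) : 0 <= mxsqnorm K.
Proof. by apply: sumr_ge0 => i _; apply: sumr_ge0 => j _; apply: sqr_ge0. Qed.

Lemma mxsqnorm_eq0 {K : 'M[R]_m} : mxsqnorm K = 0 -> K = 0.
Proof.
have row_ge0 i : 0 <= \sum_(j < m) K i j ^+ 2.
  by apply: sumr_ge0 => j _; apply: sqr_ge0.
move=> /psumr_eq0P rows0; apply/matrixP => i j; rewrite mxE; apply/eqP.
rewrite -sqrf_eq0; apply/eqP.
by apply: (psumr_eq0P _ (rows0 (fun i _ => row_ge0 i) i isT)) => // k _; apply: sqr_ge0.
Qed.

Lemma spectral_ratio_le (K L : 'M[R]_m) :
  \tr K = \tr L -> 0 <= \tr L -> (forall i j, L i j ^+ 2 <= K i j ^+ 2) ->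
  spectral_ratio K <= spectral_ratio L.
Proof.
move=> trKL trL_ge0 sqLK; rewrite /spectral_ratio trKL -/(mxsqnorm K) -/(mxsqnorm L).
have normLK : mxsqnorm L <= mxsqnorm K.
  by apply: ler_sum => i _; apply: ler_sum => j _.
have [L0|] := eqVneq (mxsqnorm L) 0.
  by rewrite (mxsqnorm_eq0 L0) mxtrace0 !mul0r.
move=> normL_neq0; have normL_gt0 : 0 < mxsqnorm L.
  by rewrite lt0r normL_neq0 mxsqnorm_ge0.
rewrite ler_wpM2l // lef_pV2 ?posrE ?sqrtr_gt0 ?(lt_le_trans normL_gt0) //.
by rewrite ler_sqrt ?mxsqnorm_ge0.
Qed.

End SpectralRatio.

Section NormalizedCKernel.

Variables (R : rcfType) (n : nat).

Lemma nckernel_sqr d (x z : bvec n) :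
  nckernel R d x z ^+ 2
    = (ckernel d x z)%:R ^+ 2 / ((ckernel d x x)%:R * (ckernel d z z)%:R).
Proof. by rewrite /nckernel expr_div_n sqr_sqrtr // mulr_ge0. Qed.

Lemma ckernel_diag_gt0 d (x : bvec n) : (d <= binner x x)%N -> (0 < ckernel d x x)%N.
Proof. by rewrite bin_gt0. Qed.

Lemma nckernel_diag d (x : bvec n) : (d <= binner x x)%N -> nckernel R d x x = 1.
Proof.
move=> dx; rewrite /nckernel -expr2 sqrtr_sqr ger0_norm // divff //.
by rewrite pnatr_eq0 -lt0n ckernel_diag_gt0.
Qed.

Lemma nckernel_succ_sqr_le d (x z : bvec n) :
  (d.+1 <= binner x x)%N -> (d.+1 <= binner z z)%N ->
  nckernel R d.+1 x z ^+ 2 <= nckernel R d x z ^+ 2.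
Proof.
move=> dx dz; have dx' := ltnW dx; have dz' := ltnW dz.
rewrite !nckernel_sqr ler_pdivrMr ?mulr_gt0 ?ltr0n ?ckernel_diag_gt0 //.
rewrite mulrAC ler_pdivlMr ?mulr_gt0 ?ltr0n ?ckernel_diag_gt0 //.
rewrite -!natrX -!natrM ler_nat.
by apply: bin_sqr_succ_ratio_le; [apply: binner_le_diagl | apply: binner_le_diagr].
Qed.

Lemma nkmatrix_trace d m (X : 'I_m -> bvec n) :
  (forall i, (d <= binner (X i) (X i))%N) -> \tr (nkmatrix R d X) = m%:R.
Proof.
move=> dX; rewrite /mxtrace (eq_bigr (fun=> 1)) ?sumr_const ?card_ord // => i _.
by rewrite mxE nckernel_diag.
Qed.

End NormalizedCKernel.

Theorem mainTheorem1 (R : rcfType) (n d m : nat) (X : 'I_m -> bvec n) :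
  (1 <= d)%N ->
  (forall i : 'I_m, (d.+1 <= binner (X i) (X i))%N) ->
  (forall i j : 'I_m,
      nckernel R d.+1 (X i) (X j) ^+ 2 <= nckernel R d (X i) (X j) ^+ 2) /\
  spectral_ratio (nkmatrix R d X) <= spectral_ratio (nkmatrix R d.+1 X).
Proof.
move=> _ dX.
have sqr_le i j : nckernel R d.+1 (X i) (X j) ^+ 2 <= nckernel R d (X i) (X j) ^+ 2.
  exact: nckernel_succ_sqr_le.
split=> //; apply: spectral_ratio_le => [||i j]; last by rewrite !mxE.
- by rewrite !nkmatrix_trace // => i; apply: ltnW.
- by rewrite nkmatrix_trace // ler0n.
Qed.
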